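(* Let $R_1,\dots,R_M\subseteq\mathbb{R}^N$ be finitely many pairwise disjoint sets whose union is $\mathbb{R}^N$, and let $f:\mathbb{R}^N\to\mathbb{R}$ be continuous such that for each $i$, $|f(x)-f(y)|\le\|x-y\|$ for all $x,y\in R_i$. Then $|f(x)-f(y)|\le\|x-y\|$ for all $x,y\in\mathbb{R}^N$.
   Context: $\|\cdot\|$ is the Euclidean norm. No measurability or regularity of the sets $R_i$ is assumed. *)

(* R^N is modelled as row vectors 'rV[R]_N over an
   arbitrary realType R, with its canonical (product) topology, which coincides
   with the Euclidean topology. The Euclidean norm is defined explicitly, since
   the library's norm on matrices is the sup norm. *)
From HB Require Import structures.
From mathcomp Require Import all_boot all_order all_algebra.
From mathcomp Require Import all_classical all_reals all_analysis.
Set Implicit Arguments. Unset Strict Implicit. Unset Printing Implicit Defensive.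
Import Order.TTheory GRing.Theory Num.Theory.
Local Open Scope ring_scope.

Definition enorm {R : realType} {N : nat} (x : 'rV[R]_N) : R :=
  Num.sqrt (\sum_(i < N) (x ord0 i) ^+ 2).

(* Restrict f to the line g t := f (x + t (y - x)).  By continuity, the
   Lipschitz bound on a piece extends to every point of its closure, while a
   point c outside the closure has a neighbourhood missing the piece.  As the
   pieces are finitely many and cover the line, every c has a neighbourhood on
   which |g t - g c| <= L |t - c|, and a supremum argument turns this local
   bound into the global one. *)
From HB Require Import structures.
From mathcomp Require Import all_boot all_order all_algebra.
From mathcomp Require Import all_classical all_reals all_analysis.
From mathcomp Require Import lra.
Import Order.TTheory GRing.Theory Num.Theory.
Import numFieldNormedType.Exports.
Local Open Scope classical_set_scope.
Local Open Scope ring_scope.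

Section PiecewiseLipschitz.
Variables (R : realType) (V : normedModType R) (g : V -> R) (L : R).
Hypothesis g_cont : continuous g.

Lemma lipschitz_closure (A : set V) :
  (forall s t, A s -> A t -> `|g s - g t| <= L * `|s - t|) ->
  forall c t, closure A c -> A t -> `|g t - g c| <= L * `|t - c|.
Proof.
move=> gA c t Ac At.
pose h z := `|g t - g z| - L * `|t - z|.
have h_cont : continuous h.
  move=> z; apply: cvgB; last apply: cvgM; last apply: cvg_norm.
  - by apply: cvg_norm; apply: cvgB; [exact: cvg_cst | exact: g_cont].
  - exact: cvg_cst.
  - by apply: cvgB; [exact: cvg_cst | exact: cvg_id].
have h_le0_closed : closed (h @^-1` [set r | r <= 0]).
  by apply: preimage_closed; [move=> z _; exact: h_cont | exact: closed_le].
have AB : A `<=` h @^-1` [set r | r <= 0].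
  by move=> s As; rewrite /h /= subr_le0; exact: gA.
by have := h_le0_closed c (closureS AB Ac); rewrite /h /= subr_le0.
Qed.

Lemma near_lipschitz_of_cover (I : finType) (P : I -> set V) :
  (forall v, exists i, P i v) ->
  (forall i s t, P i s -> P i t -> `|g s - g t| <= L * `|s - t|) ->
  forall c, \forall t \near c, `|g t - g c| <= L * `|t - c|.
Proof.
move=> cover gP c.
have near_piece i : \forall t \near c, P i t -> `|g t - g c| <= L * `|t - c|.
  have [Pc|] := pselect (closure (P i) c).
    by apply: nearW => t; exact: lipschitz_closure (gP i) c t Pc.
  rewrite /closure /= => /existsNP[B /not_implyP[cB /set0P/negP]].
  rewrite negbK => /eqP PB0.
  apply: filterS cB => t Bt Pt; suff : (P i `&` B) t by rewrite PB0.
  by split.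
apply: filterS (filter_forall _ near_piece) => t near_t.
by have [i Pt] := cover t; exact: near_t i Pt.
Qed.

End PiecewiseLipschitz.

Lemma lipschitz_of_near_lipschitz (R : realType) (g : R -> R) (L : R) :
  (forall c, \forall t \near c, `|g t - g c| <= L * `|t - c|) ->
  forall a b, `|g b - g a| <= L * `|b - a|.
Proof.
move=> gnear.
suff le_ab a b : a <= b -> `|g b - g a| <= L * `|b - a|.
  by move=> a b; have [/le_ab //|/ltW/le_ab] := leP a b; rewrite distrC (distrC b).
move=> ab.
pose S := [set t | a <= t <= b /\ `|g t - g a| <= L * (t - a)].
have Sa : S a by split; rewrite ?lexx ?ab // !subrr normr0 mulr0.
have hS : has_sup S by split; [exists a | exists b => t [/andP[]]].
set c := sup S.
have ac : a <= c := sup_upper_bound hS Sa.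
have cb : c <= b by apply: ge_sup; [exists a | move=> t [/andP[]]].
have [d d0 near_c] : exists2 d, 0 < d &
    forall t, `|c - t| < d -> `|g t - g c| <= L * `|t - c|.
  by have /nbhs_normP[d d0 Hd] := gnear c; exists d => // t ct; apply: Hd.
have Sc : S c.
  split; first by rewrite ac cb.
  have [s Ss cs] := sup_adherent d0 hS; rewrite -/c in cs.
  have sc : s <= c := sup_upper_bound hS Ss.
  have [_ gsa] := Ss.
  have dist_sc : `|s - c| = c - s by rewrite distrC ger0_norm ?subr_ge0.
  have := near_c s; rewrite (distrC c) dist_sc => /(_ ltac:(lra)) gsc.
  have := ler_distD (g s) (g c) (g a); rewrite distrC in gsc; lra.
have [cb'|] := eqVneq c b.
  by have [_] := Sc; rewrite cb' (ger0_norm (x := b - a)) ?subr_ge0.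
move=> neq_cb; have lt_cb : c < b by rewrite lt_neqAle neq_cb cb.
pose m := Num.min d (b - c).
have m_pos : 0 < m by rewrite lt_min d0 subr_gt0.
have m_d : m <= d by rewrite ge_min lexx.
have m_bc : m <= b - c by rewrite ge_min lexx orbT.
have St : S (c + m / 2).
  split; first by apply/andP; split; lra.
  have dist_tc : `|c + m / 2 - c| = m / 2 by rewrite addrAC subrr add0r ger0_norm; lra.
  have := near_c (c + m / 2); rewrite (distrC c) dist_tc => /(_ ltac:(lra)) gtc.
  have [_ gca] := Sc; have := ler_distD (g c) (g (c + m / 2)) (g a); lra.
have := sup_upper_bound hS St; rewrite -/c; lra.
Qed.

Lemma enormZ (R : realType) (N : nat) (a : R) (v : 'rV[R]_N) :
  enorm (a *: v) = `|a| * enorm v.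
Proof.
rewrite /enorm.
have -> : \sum_(i < N) (a *: v) ord0 i ^+ 2 = a ^+ 2 * \sum_(i < N) v ord0 i ^+ 2.
  by rewrite mulr_sumr; apply: eq_bigr => i _; rewrite mxE exprMn.
by rewrite sqrtrM ?sqr_ge0 // sqrtr_sqr.
Qed.

Theorem mainTheorem12 (R : realType) (N M : nat)
  (Rs : 'I_M -> set 'rV[R]_N) (f : 'rV[R]_N -> R)
  (Hdisj : forall i j : 'I_M, i != j -> Rs i `&` Rs j = set0)
  (Hcover : \bigcup_(i in [set: 'I_M]) Rs i = [set: 'rV[R]_N])
  (Hcont : continuous f)
  (Hlip : forall i : 'I_M, forall x y, Rs i x -> Rs i y ->
            `|f x - f y| <= enorm (x - y)) :
  forall x y : 'rV[R]_N, `|f x - f y| <= enorm (x - y).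
Proof.
move=> x y; pose v := y - x; pose line (t : R) := x + t *: v.
have g_cont : continuous (f \o line).
  move=> t; apply: continuous_comp; last exact: Hcont.
  by apply: continuousD; [exact: cst_continuous | exact: scalel_continuous].
have line_sub s t : line s - line t = (s - t) *: v.
  by rewrite /line scalerBl opprD addrACA subrr add0r.
have line0 : line 0 = x by rewrite /line scale0r addr0.
have line1 : line 1 = y by rewrite /line scale1r /v addrC subrK.
rewrite -line0 -line1 line_sub enormZ mulrC.
apply: (@lipschitz_of_near_lipschitz _ (f \o line)).
apply: (@near_lipschitz_of_cover _ _ _ _ g_cont _ (fun i t => Rs i (line t))).
- move=> t; have : [set: 'rV[R]_N] (line t) by [].
  by rewrite -Hcover => -[i _ Hi]; exists i.
- by move=> i s t Ps Pt; have := Hlip i _ _ Ps Pt; rewrite line_sub enormZ mulrC.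
Qed.
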